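(* Let $\tilde F:\mathbb C^6\to\mathbb C^6$ be a homogeneous (polynomial, degree $p$) vector field equivariant with respect to the $[4,8]$ representation of $\Gamma=D_4\dot+T^2$. Then there exists an $\mathcal E(2)$-equivariant polynomial vector field $\mathcal F$ of degree $p$ on $E_\kappa$ with $\tilde F=\mathcal F|_{E^c}$ if and only if for every $\theta\in\mathbb R$, $R_\theta\tilde F(\Phi)=\tilde F(R_\theta\Phi)$ for all $\Phi\in E^c$ with $R_\theta\Phi\in E^c$.
   Context: Integers $l_1>l_2>n_2>0$ with $\kappa^2=l_1^2=l_2^2+n_2^2$; $A(\kappa)=\{k:|k|=\kappa\}$, $E_\kappa$ = space of $a:A(\kappa)\to\mathbb C$ with $\sum|a(k)|<\infty$. Wave vectors $q_1=(l_1,0)$, $q_2=(0,l_1)$, $p_1=(l_2,n_2)$, $p_2=(l_2,-n_2)$, $p_3=(n_2,l_2)$, $p_4=(n_2,-l_2)$, $\tilde A=\{\pm q_i,\pm p_j\}$; $E^c\subset E_\kappa$ is the real space of $a$ supported in $\tilde A$ with $a(-k)=\overline{a(k)}$, identified with $\mathbb C^6$ via $z_i=a(q_i)$, $w_j=a(p_j)$. $\mathcal E(2)$ acts by $(\gamma a)(k)=a(\gamma^{-1}k)$ ($\gamma\in O(2)$) and $(T_{s,t}a)(k)=e^{-i(sk_x+tk_y)}a(k)$; $R_\theta$ is counterclockwise rotation; $\Gamma$ is generated by $\gamma_1(x,y)=(-x,y)$, $\gamma_2(x,y)=(y,x)$ and $T_{s,t}$ with $(s,t)\in(\mathbb R/2\pi\mathbb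 Z)^2$, which preserve $E^c$. An $\mathcal E(2)$-equivariant polynomial vector field of degree $p$ on $E_\kappa$ is a map on finitely supported $a$ of the form $\mathcal F(a)(k)=\sum_{k_1,\dots,k_p\in A(\kappa)}P(k,k_1,\dots,k_p)a(k_1)\cdots a(k_p)$ (finitely many nonzero terms) commuting with all of $\mathcal E(2)$. *)

From Stdlib Require Import Reals List.
From Coquelicot Require Import Coquelicot.
Import ListNotations.
Open Scope R_scope.

(** Points of R^2 (wave vectors) and fields a : R^2 -> C.  An element of E_kappa
    is represented by its values; only values on the circle A(kappa) matter. *)
Definition pt := (R * R)%type.
Definition field := pt -> C.

Definition pt_eqb (k k' : pt) : bool :=
  if Req_EM_T (fst k) (fst k') then
    (if Req_EM_T (snd k) (snd k') then true else false)
  else false.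

Definition pt_opp (k : pt) : pt := (- fst k, - snd k).

Definition on_circle (kappa : R) (k : pt) : Prop :=
  sqrt (fst k ^ 2 + snd k ^ 2) = kappa.

Definition ext_eq (f g : field) : Prop := forall k, f k = g k.

(** 2x2 real matrices (a,b,c,d) = [[a,b],[c,d]] *)
Definition mat2 := (R * R * R * R)%type.
Definition orth (g : mat2) : Prop :=
  let '(a, b, c, d) := g in
  a * a + c * c = 1 /\ b * b + d * d = 1 /\ a * b + c * d = 0.
Definition mat_app (g : mat2) (k : pt) : pt :=
  let '(a, b, c, d) := g in (a * fst k + b * snd k, c * fst k + d * snd k).
Definition mat_tr (g : mat2) : mat2 := let '(a, b, c, d) := g in (a, c, b, d).

(** (gamma a)(k) = a(gamma^{-1} k), gamma in O(2) (gamma^{-1} = gamma^T) *)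
Definition orth_act (g : mat2) (f : field) : field :=
  fun k => f (mat_app (mat_tr g) k).

Definition rot_mat (theta : R) : mat2 := (cos theta, - sin theta, sin theta, cos theta).
Definition rot_act (theta : R) (f : field) : field := orth_act (rot_mat theta) f.

Definition cexp_mi (phi : R) : C := (cos phi, - sin phi).
Definition trans_act (s t : R) (f : field) : field :=
  fun k => Cmult (cexp_mi (s * fst k + t * snd k)) (f k).

Definition gamma1 : mat2 := (-1, 0, 0, 1).
Definition gamma2 : mat2 := (0, 1, 1, 0).

(** C^6 is represented by nat -> C, only coordinates 0..5 being used:
    z_1 = v 0, z_2 = v 1, w_1 = v 2, ..., w_4 = v 5. *)
Definition C6 := nat -> C.

Definition wave (l1 l2 n2 : R) (i : nat) : pt :=
  match i with
  | 0 => (l1, 0)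
  | 1 => (0, l1)
  | 2 => (l2, n2)
  | 3 => (l2, - n2)
  | 4 => (n2, l2)
  | _ => (n2, - l2)
  end.

(** the element a of E^c with a(q_i)=z_i, a(p_j)=w_j, a(-k)=conj a(k),
    a = 0 off tilde A *)
Definition emb (l1 l2 n2 : R) (v : C6) : field := fun k =>
  fold_right (fun i acc =>
      if pt_eqb k (wave l1 l2 n2 i) then v i
      else if pt_eqb k (pt_opp (wave l1 l2 n2 i)) then Cconj (v i)
      else acc)
    (RtoC 0) [0; 1; 2; 3; 4; 5]%nat.

Definition cvar (v : C6) (j : nat) : C :=
  if Nat.ltb j 6 then v j else Cconj (v (j - 6)%nat).
Definition mono_eval (v : C6) (m : list nat) : C :=
  fold_right Cmult (RtoC 1) (map (cvar v) m).
Definition hom_poly_C6 (p : nat) (f : C6 -> C) : Prop :=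
  exists terms : list (C * list nat),
    (forall c m, In (c, m) terms -> length m = p /\ forall j, In j m -> (j < 12)%nat) /\
    forall v, f v = fold_right Cplus (RtoC 0)
                      (map (fun cm => Cmult (fst cm) (mono_eval v (snd cm))) terms).
Definition hom_poly_field_C6 (p : nat) (F : C6 -> C6) : Prop :=
  forall i, (i < 6)%nat -> hom_poly_C6 p (fun v => F v i).

(** equivariance of F~ w.r.t. the action of a transformation preserving E^c,
    transported to C^6 through the identification emb *)
Definition equivariant_Ec (l1 l2 n2 : R) (act : field -> field) (F : C6 -> C6) : Prop :=
  forall v v', ext_eq (emb l1 l2 n2 v') (act (emb l1 l2 n2 v)) ->
    ext_eq (emb l1 l2 n2 (F v')) (act (emb l1 l2 n2 (F v))).

Definition Gamma_equivariant (l1 l2 n2 : R) (F : C6 -> C6) : Prop :=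
  equivariant_Ec l1 l2 n2 (orth_act gamma1) F /\
  equivariant_Ec l1 l2 n2 (orth_act gamma2) F /\
  (forall s t, equivariant_Ec l1 l2 n2 (trans_act s t) F).

Fixpoint tuples {A : Type} (l : list A) (p : nat) : list (list A) :=
  match p with
  | O => [[]]
  | S p' => flat_map (fun x => map (cons x) (tuples l p')) l
  end.

(** l is a duplicate-free list of points of A(kappa) containing the support of a
    (so a is a finitely supported element of E_kappa) *)
Definition supp_list (kappa : R) (a : field) (l : list pt) : Prop :=
  NoDup l /\ (forall k, In k l -> on_circle kappa k) /\
  (forall k, a k <> RtoC 0 -> In k l).

Definition E2_poly_field (kappa : R) (p : nat) (F : field -> field) : Prop :=
  (exists P : pt -> list pt -> C,
     forall a l, supp_list kappa a l -> forall k, on_circle kappa k ->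
       F a k = fold_right Cplus (RtoC 0)
                 (map (fun ks => Cmult (P k ks) (fold_right Cmult (RtoC 1) (map a ks)))
                      (tuples l p))) /\
  (forall g a l, orth g -> supp_list kappa a l -> forall k, on_circle kappa k ->
       F (orth_act g a) k = orth_act g (F a) k) /\
  (forall s t a l, supp_list kappa a l -> forall k, on_circle kappa k ->
       F (trans_act s t a) k = trans_act s t (F a) k).

(* Necessity: [F] commutes with [R_theta] and agrees with [Ft] on [E^c].

   Sufficiency: each component of [Ft] is a polynomial in the twelve values [a(+-q_i), a(+-p_j)].
   The rotation hypothesis together with [gamma1]- and torus-equivariance says that these
   polynomials commute with every orthogonal map and translation keeping their arguments in
   [tilde A]; first for conjugate-symmetric [a], then, by polarisation, for all complex [a].
   The coefficient [P(k; k_1..k_p)] of [a(k_1)...a(k_p)] is extracted by inclusion-exclusion;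
   translation invariance makes it vanish unless [k_1 + ... + k_p = k], and orthogonal
   invariance makes it consistently defined on every tuple that some [g] in O(2) moves into
   [tilde A] (it is zero on all other tuples).  This kernel defines the required [F]. *)

From Stdlib Require Import Reals List Permutation Lra Lia ClassicalEpsilon FunctionalExtensionality.
From Coquelicot Require Import Coquelicot.
Import ListNotations.
Open Scope R_scope.

Definition Csum (l : list C) : C := fold_right Cplus (RtoC 0) l.
Definition Cprod (l : list C) : C := fold_right Cmult (RtoC 1) l.
Definition Cind (P : Prop) : C := if excluded_middle_informative P then RtoC 1 else RtoC 0.

Lemma Csum_cons y l : Csum (y :: l) = Cplus y (Csum l).
Proof. reflexivity. Qed.

Lemma Csum_app l1 l2 : Csum (l1 ++ l2) = Cplus (Csum l1) (Csum l2).
Proof. induction l1 as [|y l1 IH]; unfold Csum in *; simpl; [ring|]. rewrite IH; ring. Qed.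

Lemma Csum_ext {A} (f g : A -> C) l : (forall x, In x l -> f x = g x) ->
  Csum (map f l) = Csum (map g l).
Proof. intros H; f_equal; apply map_ext_in; auto. Qed.

Lemma Cprod_ext {A} (f g : A -> C) l : (forall x, In x l -> f x = g x) ->
  Cprod (map f l) = Cprod (map g l).
Proof. intros H; f_equal; apply map_ext_in; auto. Qed.

Lemma Csum_zero {A} (f : A -> C) l : (forall x, In x l -> f x = RtoC 0) -> Csum (map f l) = RtoC 0.
Proof.
  induction l as [|x l IH]; intros H; [reflexivity|].
  rewrite map_cons, Csum_cons, H by apply in_eq.
  rewrite IH by (intros; apply H, in_cons; auto). ring.
Qed.

Lemma Csum_plus {A} (f g : A -> C) l :
  Csum (map (fun x => Cplus (f x) (g x)) l) = Cplus (Csum (map f l)) (Csum (map g l)).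
Proof. induction l; unfold Csum in *; simpl; [ring|]. rewrite IHl; ring. Qed.

Lemma Csum_scal_l {A} (c : C) (f : A -> C) l :
  Csum (map (fun x => Cmult c (f x)) l) = Cmult c (Csum (map f l)).
Proof. induction l; unfold Csum in *; simpl; [ring|]. rewrite IHl; ring. Qed.

Lemma Csum_scal_r {A} (c : C) (f : A -> C) l :
  Csum (map (fun x => Cmult (f x) c) l) = Cmult (Csum (map f l)) c.
Proof. induction l; unfold Csum in *; simpl; [ring|]. rewrite IHl; ring. Qed.

Lemma Cprod_mult {A} (f g : A -> C) l :
  Cprod (map (fun x => Cmult (f x) (g x)) l) = Cmult (Cprod (map f l)) (Cprod (map g l)).
Proof. induction l; unfold Cprod in *; simpl; [ring|]. rewrite IHl; ring. Qed.

Lemma Csum_flat_map {A B} (f : B -> C) (g : A -> list B) l :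
  Csum (map f (flat_map g l)) = Csum (map (fun x => Csum (map f (g x))) l).
Proof. induction l; simpl; auto. rewrite map_app, Csum_app, IHl; reflexivity. Qed.

Lemma Csum_swap {A B} (f : A -> B -> C) l1 l2 :
  Csum (map (fun x => Csum (map (fun y => f x y) l2)) l1) =
  Csum (map (fun y => Csum (map (fun x => f x y) l1)) l2).
Proof.
  induction l1 as [|x l1 IH]; simpl.
  - symmetry; apply Csum_zero; auto.
  - rewrite IH, <- Csum_plus; reflexivity.
Qed.

Lemma Csum_perm (l l' : list C) : Permutation l l' -> Csum l = Csum l'.
Proof. induction 1; unfold Csum in *; simpl; try congruence; ring. Qed.

Lemma Cprod_perm (l l' : list C) : Permutation l l' -> Cprod l = Cprod l'.
Proof. induction 1; unfold Cprod in *; simpl; try congruence; ring. Qed.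

Lemma Csum_conj l : Cconj (Csum l) = Csum (map Cconj l).
Proof.
  induction l; unfold Csum in *; simpl.
  - apply injective_projections; simpl; ring.
  - rewrite Cplus_conj, IHl; auto.
Qed.

Lemma Cprod_conj l : Cconj (Cprod l) = Cprod (map Cconj l).
Proof.
  induction l; unfold Cprod in *; simpl.
  - apply injective_projections; simpl; ring.
  - rewrite Cmult_conj, IHl; auto.
Qed.

Lemma Cind_true (P : Prop) : P -> Cind P = RtoC 1.
Proof. intros; unfold Cind; destruct excluded_middle_informative; tauto. Qed.

Lemma Cind_false (P : Prop) : ~ P -> Cind P = RtoC 0.
Proof. intros; unfold Cind; destruct excluded_middle_informative; tauto. Qed.

Lemma Cind_iff P Q : (P <-> Q) -> Cind P = Cind Q.
Proof. intros; unfold Cind; do 2 destruct excluded_middle_informative; tauto. Qed.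

Lemma Cind_and P Q : Cind (P /\ Q) = Cmult (Cind P) (Cind Q).
Proof. unfold Cind; repeat destruct excluded_middle_informative; try tauto; ring. Qed.

Lemma Cind_not P : Cind (~ P) = Cminus (RtoC 1) (Cind P).
Proof. unfold Cind; repeat destruct excluded_middle_informative; try tauto; ring. Qed.

Lemma Cprod_Cind {A} (P : A -> Prop) l :
  Cprod (map (fun x => Cind (P x)) l) = Cind (forall x, In x l -> P x).
Proof.
  induction l as [|y l IH]; simpl.
  - symmetry; apply Cind_true; simpl; tauto.
  - unfold Cprod in *; simpl. rewrite IH, <- Cind_and. apply Cind_iff. simpl; firstorder congruence.
Qed.

Lemma Csum_Cind_unique {X} (P : X -> Prop) (L : list X) r : NoDup L -> In r L -> P r ->
  (forall y, In y L -> P y -> y = r) -> Csum (map (fun y => Cind (P y)) L) = RtoC 1.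
Proof.
  intros ND; induction ND as [|x L Hx ND IH]; intros Hr HP Hu; [contradiction|].
  rewrite map_cons, Csum_cons. destruct Hr as [<-|Hr].
  - rewrite Cind_true by auto.
    rewrite Csum_zero; [ring|]. intros y Hy. apply Cind_false. intros Py.
    assert (y = x) as -> by (apply Hu; simpl; auto). auto.
  - assert (Hx' : ~ P x) by (intros Px; assert (x = r) as -> by (apply Hu; simpl; auto); auto).
    rewrite Cind_false, IH by (auto; intros; apply Hu; simpl; auto). ring.
Qed.

Lemma Csum_Cind_re {X} (P : X -> Prop) L :
  0 <= fst (Csum (map (fun y => Cind (P y)) L)) /\
  ((exists y, In y L /\ P y) -> 1 <= fst (Csum (map (fun y => Cind (P y)) L))).
Proof.
  induction L as [|y L [IH1 IH2]]; [simpl; split; [lra|intros [y [[] _]]]|].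
  rewrite map_cons, Csum_cons. change (fst (Cplus ?u ?v)) with (fst u + fst v).
  destruct (classic (P y)) as [Hy|Hy]; [rewrite Cind_true by auto|rewrite Cind_false by auto];
    simpl fst; split; try lra; intros [z [[<-|Hz] Pz]]; try contradiction; try lra.
  all: enough (1 <= fst (Csum (map (fun y => Cind (P y)) L))) by lra; eauto.
Qed.

Lemma In_tuples {A} (l : list A) p ks :
  In ks (tuples l p) <-> length ks = p /\ forall x, In x ks -> In x l.
Proof.
  revert ks; induction p as [|p IH]; intros ks; simpl.
  - split; [intros [<-|[]]; simpl; tauto|]. intros [H _]; destruct ks; simpl in *; auto; lia.
  - rewrite in_flat_map. split.
    + intros [x [Hx Hin]]. apply in_map_iff in Hin. destruct Hin as [ks' [<- Hk]].
      apply IH in Hk as [Hl Hk]. simpl; split; [lia|]. intros y [<-|Hy]; auto.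
    + intros [Hl Hin]. destruct ks as [|x ks']; simpl in Hl; [lia|]. exists x.
      split; [apply Hin; left; auto|]. apply in_map, IH. split; [lia|]. intros; apply Hin; right; auto.
Qed.

Lemma NoDup_flat_map_cons {A} (T : list (list A)) l : NoDup l -> NoDup T ->
  NoDup (flat_map (fun x => map (cons x) T) l).
Proof.
  intros Hl HT; induction Hl as [|x l Hx Hl IH]; simpl; [constructor|]. apply NoDup_app; auto.
  - apply FinFun.Injective_map_NoDup; auto. intros a b E; injection E; auto.
  - intros ks H1 H2. apply in_map_iff in H1 as [k1 [<- _]].
    apply in_flat_map in H2 as [y [Hy H3]]. apply in_map_iff in H3 as [k2 [E _]].
    injection E; intros; subst; auto.
Qed.

Lemma NoDup_tuples {A} (l : list A) p : NoDup l -> NoDup (tuples l p).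
Proof.
  intros Hl; induction p as [|p IH]; simpl.
  - constructor; [intros []|constructor].
  - apply NoDup_flat_map_cons; auto.
Qed.

Lemma tuples_map {A B} (g : A -> B) l p : tuples (map g l) p = map (map g) (tuples l p).
Proof.
  induction p as [|p IH]; simpl; auto. rewrite IH.
  generalize (tuples l p); intros T. clear IH.
  induction l as [|x l IHl]; simpl; auto. rewrite IHl, map_app, !map_map; reflexivity.
Qed.

Lemma Csum_nonzero_filter {A} (a c : A -> C) l :
  Csum (map (fun x => Cmult (a x) (c x)) l) =
  Csum (map (fun x => Cmult (a x) (c x))
            (filter (fun x => if excluded_middle_informative (a x = RtoC 0) then false else true) l)).
Proof.
  induction l as [|x l IH]; [reflexivity|]. rewrite map_cons, Csum_cons. cbn [filter].
  destruct excluded_middle_informative as [E|E].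
  - rewrite IH, E. ring.
  - rewrite map_cons, Csum_cons, IH. auto.
Qed.

Lemma Csum_support_indep {A} (a c : A -> C) l l' : NoDup l -> NoDup l' ->
  (forall x, a x <> RtoC 0 -> In x l) -> (forall x, a x <> RtoC 0 -> In x l') ->
  Csum (map (fun x => Cmult (a x) (c x)) l) = Csum (map (fun x => Cmult (a x) (c x)) l').
Proof.
  intros N1 N2 S1 S2. rewrite (Csum_nonzero_filter a c l), (Csum_nonzero_filter a c l').
  apply Csum_perm, Permutation_map, NoDup_Permutation; auto using NoDup_filter.
  intros x. rewrite !filter_In. destruct excluded_middle_informative; split; intros [H1 H2];
    try discriminate; split; auto.
Qed.

Lemma Csum_tuples_support_indep {A} (a : A -> C) l l' : NoDup l -> NoDup l' ->
  (forall x, a x <> RtoC 0 -> In x l) -> (forall x, a x <> RtoC 0 -> In x l') ->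
  forall n (g : list A -> C),
  Csum (map (fun ks => Cmult (g ks) (Cprod (map a ks))) (tuples l n)) =
  Csum (map (fun ks => Cmult (g ks) (Cprod (map a ks))) (tuples l' n)).
Proof.
  intros N1 N2 S1 S2 n. induction n as [|n IH]; intros g; simpl; auto.
  rewrite !Csum_flat_map.
  assert (E : forall L, Csum (map (fun x => Csum (map (fun ks => Cmult (g ks) (Cprod (map a ks)))
                                                     (map (cons x) (tuples L n)))) L) =
      Csum (map (fun x => Cmult (a x) (Csum (map (fun ks => Cmult (g (x :: ks)) (Cprod (map a ks)))
                                                  (tuples L n)))) L)).
  { intros L. apply Csum_ext. intros x _. rewrite map_map, <- Csum_scal_l. apply Csum_ext.
    intros ks _. unfold Cprod; simpl. ring. }
  rewrite !E. erewrite Csum_ext; [apply Csum_support_indep; auto|].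
  intros x _. simpl. rewrite (IH (fun ks => g (x :: ks))). reflexivity.
Qed.

(** * Inclusion-exclusion over index tuples *)

Definition zipprod {A B} (x : A -> B -> C) (ts : list A) (phi : list B) : C :=
  Cprod (map (fun tj => x (fst tj) (snd tj)) (combine ts phi)).

Lemma zipprod_ext {X Y} (x y : X -> Y -> C) ts phi :
  (forall t j, x t j = y t j) -> zipprod x ts phi = zipprod y ts phi.
Proof. intros H; unfold zipprod. apply Cprod_ext. intros; apply H. Qed.

Lemma zipprod_mult {A B} (x y : A -> B -> C) ts phi :
  zipprod (fun t j => Cmult (x t j) (y t j)) ts phi = Cmult (zipprod x ts phi) (zipprod y ts phi).
Proof. unfold zipprod. rewrite <- Cprod_mult. reflexivity. Qed.

Lemma zipprod_r {A B} (f : B -> C) (ts : list A) phi : length ts = length phi ->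
  zipprod (fun _ j => f j) ts phi = Cprod (map f phi).
Proof.
  revert phi; induction ts; intros [|j phi] H; simpl in *; try lia; auto.
  unfold zipprod, Cprod in *; simpl. f_equal. apply IHts; lia.
Qed.

Lemma zipprod_l {A B} (f : A -> C) (ts : list A) (phi : list B) : length ts = length phi ->
  zipprod (fun t _ => f t) ts phi = Cprod (map f ts).
Proof.
  revert phi; induction ts; intros [|j phi] H; simpl in *; try lia; auto.
  unfold zipprod, Cprod in *; simpl. f_equal. apply IHts; lia.
Qed.

Lemma Cprod_Csum {A B} (x : A -> B -> C) (J : list B) (ts : list A) :
  Cprod (map (fun t => Csum (map (x t) J)) ts) =
  Csum (map (zipprod x ts) (tuples J (length ts))).
Proof.
  induction ts as [|t ts IH]; simpl.
  - unfold Csum, Cprod, zipprod; simpl; ring.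
  - change (fold_right Cmult 1 (map (fun t => Csum (map (x t) J)) ts)) with
      (Cprod (map (fun t => Csum (map (x t) J)) ts)).
    rewrite IH, Csum_flat_map, <- Csum_scal_r. apply Csum_ext; intros j _.
    rewrite map_map, <- Csum_scal_l. apply Csum_ext; intros ks _. reflexivity.
Qed.

Definition covers (n : nat) (phi : list nat) : Prop := forall j, (j < n)%nat -> In j phi.

(* A tuple [s] in [tuples bools n] encodes a subset of [{0..n-1}], and [bsign s] is
   [(-1)^(n - |s|)]. *)
Definition bools : list bool := [false; true].

Definition bsign (s : list bool) : C :=
  Cprod (map (fun b : bool => if b then RtoC 1 else RtoC (-1)) s).

Definition shift_indices (phi : list nat) : list nat :=
  map pred (filter (fun a => negb (Nat.eqb a 0)) phi).

Lemma In_shift_indices phi a : In a (shift_indices phi) <-> In (S a) phi.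
Proof.
  unfold shift_indices. rewrite in_map_iff. split.
  - intros [x [<- Hx]]. apply filter_In in Hx as [Hx H0]. destruct x; simpl in *; [discriminate|auto].
  - intros H. exists (S a); split; auto. apply filter_In; split; auto.
Qed.

Lemma Cind_nth_cons b s phi :
  Cind (forall a, In a phi -> nth a (b :: s) false = true) =
  Cmult (Cind (In 0%nat phi -> b = true))
        (Cind (forall a, In a (shift_indices phi) -> nth a s false = true)).
Proof.
  rewrite <- Cind_and. apply Cind_iff. split.
  - intros H. split; [intros H0; apply (H 0%nat H0)|].
    intros a Ha. apply In_shift_indices in Ha. apply (H (S a) Ha).
  - intros [H1 H2] [|a] Ha; simpl; auto. apply H2, In_shift_indices; auto.
Qed.

Lemma Cind_covers_S n phi :
  Cind (covers (S n) phi) = Cmult (Cind (In 0%nat phi)) (Cind (covers n (shift_indices phi))).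
Proof.
  rewrite <- Cind_and. apply Cind_iff. split.
  - intros H; split; [apply H; lia|]. intros j Hj. apply In_shift_indices, H; lia.
  - intros [H1 H2] [|j] Hj; auto. apply In_shift_indices, H2; lia.
Qed.

Lemma signed_cover_sum n : forall phi, (forall a, In a phi -> (a < n)%nat) ->
  Csum (map (fun s => Cmult (bsign s) (Cind (forall a, In a phi -> nth a s false = true)))
            (tuples bools n))
  = Cind (covers n phi).
Proof.
  induction n as [|n IH]; intros phi Hphi.
  - unfold Csum, bsign, Cprod; simpl. rewrite !Cind_true; [ring| |].
    + intros j Hj; lia.
    + intros a Ha; specialize (Hphi a Ha); lia.
  - assert (Hsh : forall a, In a (shift_indices phi) -> (a < n)%nat).
    { intros a Ha. apply In_shift_indices, Hphi in Ha. lia. }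
    set (g := fun s => Cmult (bsign s) (Cind (forall a, In a (shift_indices phi) -> nth a s false = true))).
    simpl tuples. rewrite app_nil_r, map_app, Csum_app, !map_map.
    erewrite (Csum_ext (fun x => Cmult (bsign (false :: x)) _)
                       (fun s => Cmult (Cmult (RtoC (-1)) (Cind (~ In 0%nat phi))) (g s))).
    2:{ intros s _. unfold g. rewrite Cind_nth_cons.
        rewrite (Cind_iff (In 0%nat phi -> false = true) (~ In 0%nat phi))
          by (split; intros H H'; [discriminate (H H')|contradiction]).
        unfold bsign, Cprod; simpl; ring. }
    erewrite (Csum_ext (fun x => Cmult (bsign (true :: x)) _) g).
    2:{ intros s _. unfold g. rewrite Cind_nth_cons, (Cind_true (In 0%nat phi -> true = true)) by auto.
        unfold bsign, Cprod; simpl; ring. }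
    unfold g. rewrite Csum_scal_l, IH, Cind_covers_S, Cind_not by auto. ring.
Qed.

Lemma inclusion_exclusion {A} (n : nat) (qs : list A) (x : A -> nat -> C) :
  Csum (map (fun s => Cmult (bsign s) (Cprod (map (fun q => Csum (map (fun j =>
      Cmult (Cind (nth j s false = true)) (x q j)) (seq 0 n))) qs))) (tuples bools n))
  = Csum (map (fun phi => Cmult (Cind (covers n phi)) (zipprod x qs phi))
      (tuples (seq 0 n) (length qs))).
Proof.
  erewrite Csum_ext.
  2:{ intros s _. rewrite (Cprod_Csum (fun q j => Cmult (Cind (nth j s false = true)) (x q j))).
      rewrite <- Csum_scal_l. reflexivity. }
  rewrite Csum_swap. apply Csum_ext. intros phi Hphi.
  apply In_tuples in Hphi as [Hl Hin].
  rewrite (Csum_ext _ (fun s => Cmult (Cmult (bsign s)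
              (Cind (forall a, In a phi -> nth a s false = true))) (zipprod x qs phi))).
  2:{ intros s _. rewrite zipprod_mult, zipprod_r by auto. rewrite Cprod_Cind. ring. }
  rewrite Csum_scal_r, signed_cover_sum; [reflexivity|].
  intros a Ha. apply Hin, in_seq in Ha. lia.
Qed.

Lemma nth_map_lt {X Y} (f : X -> Y) l j d d' :
  (j < length l)%nat -> nth j (map f l) d' = f (nth j l d).
Proof. intros H. rewrite (nth_indep _ d' (f d)) by (rewrite length_map; auto). apply map_nth. Qed.

Lemma map_nth_seq {X} (l : list X) d : map (fun j => nth j l d) (seq 0 (length l)) = l.
Proof.
  apply (nth_ext _ _ d d); rewrite length_map, length_seq; auto. intros j Hj.
  rewrite (nth_map_lt _ _ _ 0%nat), seq_nth by (rewrite ?length_seq; auto). reflexivity.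
Qed.

Lemma covers_perm n phi : In phi (tuples (seq 0 n) n) -> covers n phi -> Permutation phi (seq 0 n).
Proof.
  intros Hp Hs. apply In_tuples in Hp as [Hl Hin].
  assert (ND : NoDup phi).
  { apply NoDup_incl_NoDup with (l := seq 0 n); [apply seq_NoDup|rewrite length_seq; lia|].
    intros j Hj. apply in_seq in Hj. apply Hs; lia. }
  apply NoDup_Permutation; auto using seq_NoDup. intros j; split; intros Hj; auto.
  apply in_seq in Hj; apply Hs; lia.
Qed.

Section DeltaSum.

Variables (l : list pt) (a : pt -> C) (qs : list pt) (phi : list nat) (d : pt).
Hypotheses (Hl : NoDup l) (Hqs : forall q, In q qs -> In q l).
Let n := length qs.
Hypotheses (Hphi : In phi (tuples (seq 0 n) n)) (Hcov : covers n phi).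

Lemma phi_props : length phi = n /\ NoDup phi /\ (forall j, In j phi -> (j < n)%nat).
Proof.
  pose proof Hphi as H. apply In_tuples in H as [H1 H2]. repeat split; auto.
  - eapply Permutation_NoDup; [symmetry; apply covers_perm; eauto|apply seq_NoDup].
  - intros j Hj. apply H2, in_seq in Hj; lia.
Qed.

Definition pos (j : nat) : nat :=
  epsilon (inhabits 0%nat) (fun t => (t < n)%nat /\ nth t phi 0%nat = j).

Lemma pos_spec j : (j < n)%nat -> (pos j < n)%nat /\ nth (pos j) phi 0%nat = j.
Proof.
  intros Hj. unfold pos. apply epsilon_spec. apply Hcov in Hj.
  destruct phi_props as [Hlen _].
  destruct (In_nth _ _ 0%nat Hj) as [t [Ht E]]. exists t; split; auto; lia.
Qed.

Lemma combine_in t : (t < n)%nat -> In (nth t qs d, nth t phi 0%nat) (combine qs phi).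
Proof.
  intros Ht. destruct phi_props as [Hlen _]. rewrite <- combine_nth by (fold n; lia).
  apply nth_In. rewrite length_combine. unfold n in *; lia.
Qed.

Lemma combine_in_inv q j : In (q, j) (combine qs phi) ->
  exists t, (t < n)%nat /\ q = nth t qs d /\ j = nth t phi 0%nat.
Proof.
  intros H. destruct phi_props as [Hlen _].
  destruct (In_nth _ _ (d, 0%nat) H) as [t [Ht E]]. rewrite length_combine in Ht.
  rewrite combine_nth in E by (fold n; lia). injection E; intros; subst.
  exists t. split; [unfold n in *; lia|auto].
Qed.

Definition matches (ks : list pt) : Prop :=
  forall tj, In tj (combine qs phi) -> nth (snd tj) ks d = fst tj.

(* The unique tuple [ks] with [ks_(phi_t) = qs_t] for all [t]. *)
Definition delta_tuple : list pt := map (fun j => nth (pos j) qs d) (seq 0 n).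

Lemma delta_tuple_matches : matches delta_tuple.
Proof.
  intros [q j] H. simpl. destruct (combine_in_inv q j H) as [t [Ht [-> ->]]].
  destruct phi_props as [Hlen [ND Hlt]].
  assert (Hj : (nth t phi 0%nat < n)%nat) by (apply Hlt, nth_In; lia).
  unfold delta_tuple. rewrite (nth_map_lt _ _ _ 0%nat), seq_nth by (rewrite ?length_seq; auto).
  destruct (pos_spec _ Hj) as [H1 H2].
  f_equal. apply (NoDup_nth phi 0%nat) in H2; auto; lia.
Qed.

Lemma delta_tuple_in : In delta_tuple (tuples l n).
Proof.
  apply In_tuples. split; [unfold delta_tuple; rewrite length_map, length_seq; auto|].
  intros x Hx. unfold delta_tuple in Hx. apply in_map_iff in Hx as [j [<- Hj]].
  apply in_seq in Hj. apply Hqs, nth_In. apply pos_spec; lia.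
Qed.

Lemma matches_unique ks : In ks (tuples l n) -> matches ks -> ks = delta_tuple.
Proof.
  intros Hk HR. apply In_tuples in Hk as [Hlen _]. destruct phi_props as [Hlp _].
  apply (nth_ext _ _ d d); [unfold delta_tuple; rewrite length_map, length_seq; auto|].
  intros j Hj. rewrite Hlen in Hj.
  destruct (In_nth _ _ 0%nat (Hcov j Hj)) as [t [Ht E]].
  pose proof (combine_in t ltac:(lia)) as Hc. rewrite E in Hc.
  pose proof (HR _ Hc) as E1; pose proof (delta_tuple_matches _ Hc) as E2; simpl in E1, E2. congruence.
Qed.

Lemma Csum_zipprod_delta :
  Csum (map (fun ks => Cmult (Cprod (map a ks)) (zipprod (fun q j => Cind (nth j ks d = q)) qs phi))
            (tuples l n))
  = Cprod (map a qs).
Proof.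
  destruct phi_props as [Hlp [ND Hlt]].
  rewrite (Csum_ext _ (fun ks => Cmult (Cprod (map a qs)) (Cind (matches ks)))).
  - rewrite Csum_scal_l, (Csum_Cind_unique _ _ delta_tuple); [ring|..];
      auto using NoDup_tuples, delta_tuple_in, delta_tuple_matches, matches_unique.
  - intros ks Hk. apply In_tuples in Hk as [Hlen _].
    rewrite <- (map_nth_seq ks d) at 1. rewrite map_map, Hlen.
    rewrite <- (Cprod_perm _ _ (Permutation_map _ (covers_perm _ _ Hphi Hcov))).
    rewrite <- (zipprod_r (fun j => a (nth j ks d)) qs), <- zipprod_mult by lia.
    rewrite (zipprod_ext _ (fun q j => Cmult (a q) (Cind (nth j ks d = q)))).
    + rewrite zipprod_mult, zipprod_l by lia. unfold zipprod. rewrite Cprod_Cind. reflexivity.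
    + intros q j. unfold Cind. destruct excluded_middle_informative as [->|]; ring.
Qed.

End DeltaSum.

Lemma Csum_covers_delta (l : list pt) (a : pt -> C) (qs : list pt) (d : pt) :
  NoDup l -> (forall q, In q qs -> In q l) ->
  Csum (map (fun ks => Cmult (Cprod (map a ks))
          (Csum (map (fun phi => Cmult (Cind (covers (length qs) phi))
                     (zipprod (fun q j => Cind (nth j ks d = q)) qs phi))
                   (tuples (seq 0 (length qs)) (length qs)))))
        (tuples l (length qs)))
  = Cmult (Csum (map (fun phi => Cind (covers (length qs) phi)) (tuples (seq 0 (length qs)) (length qs))))
          (Cprod (map a qs)).
Proof.
  intros Hl Hqs. set (n := length qs). rewrite <- Csum_scal_r.
  rewrite (Csum_ext _ (fun ks => Csum (map (fun phi => Cmult (Cprod (map a ks))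
      (Cmult (Cind (covers n phi)) (zipprod (fun q j => Cind (nth j ks d = q)) qs phi)))
      (tuples (seq 0 n) n)))) by (intros; apply eq_sym, Csum_scal_l).
  rewrite Csum_swap. apply Csum_ext. intros phi Hphi.
  destruct (classic (covers n phi)) as [Hc|Hc].
  - rewrite Cind_true, <- (Csum_zipprod_delta l a qs phi d) by auto.
    rewrite <- Csum_scal_l. apply Csum_ext; intros; ring.
  - rewrite Cind_false by auto. rewrite Csum_zero; [ring|]. intros; ring.
Qed.

(** * Polynomials in the values of a field *)

(* A list of pairs [(c, [k_1; ...; k_m])] stands for the polynomial
   [b |-> sum c * b(k_1) * ... * b(k_m)] in the values of a field [b]. *)
Definition fpoly := list (C * list pt).

Definition fpeval (T : fpoly) (b : field) : C :=
  Csum (map (fun cq => Cmult (fst cq) (Cprod (map b (snd cq)))) T).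

Definition conj_sym (b : field) : Prop := forall x, b (pt_opp x) = Cconj (b x).
Definition supported_in (Z : list pt) (b : field) : Prop := forall x, b x <> RtoC 0 -> In x Z.
Definition opp_closed (Z : list pt) : Prop := forall x, In x Z -> In (pt_opp x) Z.

Lemma fpeval_app T1 T2 b : fpeval (T1 ++ T2) b = Cplus (fpeval T1 b) (fpeval T2 b).
Proof. unfold fpeval. rewrite map_app, Csum_app. auto. Qed.

Lemma fpeval_scal (c : C) T b :
  fpeval (map (fun cq => (Cmult c (fst cq), snd cq)) T) b = Cmult c (fpeval T b).
Proof. unfold fpeval. rewrite map_map, <- Csum_scal_l. apply Csum_ext; intros; simpl; ring. Qed.

Lemma fpeval_map_pts (f : pt -> pt) T b :
  fpeval (map (fun cq => (fst cq, map f (snd cq))) T) b = fpeval T (fun x => b (f x)).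
Proof. unfold fpeval. rewrite map_map. apply Csum_ext; intros; simpl. rewrite map_map. auto. Qed.

Lemma fpeval_ext T b b' : (forall x, b x = b' x) -> fpeval T b = fpeval T b'.
Proof. intros H. replace b' with b; auto. apply functional_extensionality; auto. Qed.

Lemma pt_opp_involutive x : pt_opp (pt_opp x) = x.
Proof. destruct x; unfold pt_opp; simpl; f_equal; ring. Qed.

Fixpoint horner (P : list C) (t : C) : C :=
  match P with [] => RtoC 0 | c :: P' => Cplus c (Cmult t (horner P' t)) end.

Fixpoint Padd (P Q : list C) : list C :=
  match P, Q with
  | [], _ => Q
  | _, [] => P
  | a :: P', b :: Q' => Cplus a b :: Padd P' Q'
  end.

Fixpoint Pmul (P Q : list C) : list C :=
  match P with [] => [] | c :: P' => Padd (map (Cmult c) Q) (RtoC 0 :: Pmul P' Q) end.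

Lemma horner_add P Q t : horner (Padd P Q) t = Cplus (horner P t) (horner Q t).
Proof. revert Q; induction P; intros [|b Q]; simpl; try ring. rewrite IHP; ring. Qed.

Lemma horner_scal c Q t : horner (map (Cmult c) Q) t = Cmult c (horner Q t).
Proof. induction Q; simpl; [ring|]. rewrite IHQ; ring. Qed.

Lemma horner_mul P Q t : horner (Pmul P Q) t = Cmult (horner P t) (horner Q t).
Proof. induction P; simpl; [ring|]. rewrite horner_add, horner_scal. simpl. rewrite IHP. ring. Qed.

Lemma fpeval_affine_poly (y z : field) T : exists P, forall t,
  fpeval T (fun x => Cplus (y x) (Cmult t (z x))) = horner P t.
Proof.
  assert (Hprod : forall qs, exists P, forall t,
            Cprod (map (fun x => Cplus (y x) (Cmult t (z x))) qs) = horner P t).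
  { induction qs as [|q qs [P HP]].
    - exists [RtoC 1]. intros t; unfold Cprod; simpl; ring.
    - exists (Pmul [y q; z q] P). intros t. rewrite horner_mul. unfold Cprod in *; simpl.
      rewrite HP. ring. }
  induction T as [|[c qs] T [P HP]]; [exists []; reflexivity|].
  destruct (Hprod qs) as [Q HQ]. exists (Padd (map (Cmult c) Q) P). intros t.
  rewrite horner_add, horner_scal, <- HP, <- HQ. reflexivity.
Qed.

Definition sum_Cmod (P : list C) : R := fold_right Rplus 0 (map Cmod P).

Lemma horner_bound P t : Cmod t <= 1 -> Cmod (horner P t) <= sum_Cmod P.
Proof.
  intros Ht; induction P as [|c P IH]; unfold sum_Cmod in *; simpl; [rewrite Cmod_0; lra|].
  eapply Rle_trans; [apply Cmod_triangle|]. rewrite Cmod_mult.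
  pose proof (Cmod_ge_0 (horner P t)). pose proof (Cmod_ge_0 t). nra.
Qed.

Lemma sum_Cmod_ge0 P : 0 <= sum_Cmod P.
Proof. induction P; unfold sum_Cmod in *; simpl; [lra|]. pose proof (Cmod_ge_0 a); lra. Qed.

(* [|c| <= r M] for all small [r > 0] forces [c = 0]. *)
Lemma horner_const_zero c P :
  (forall r : R, 0 < r <= 1 -> horner (c :: P) (RtoC r) = RtoC 0) -> c = RtoC 0.
Proof.
  intros H. apply Cmod_eq_0. pose proof (sum_Cmod_ge0 P) as HM. set (M := sum_Cmod P) in HM |- *.
  assert (Hb : forall r, 0 < r <= 1 -> Cmod c <= r * M).
  { intros r Hr. specialize (H r Hr). simpl in H.
    replace c with (Copp (Cmult (RtoC r) (horner P r)))
      by (rewrite <- (Cplus_0_l (Copp _)), <- H; ring).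
    rewrite Cmod_opp, Cmod_mult, Cmod_R, Rabs_pos_eq by lra.
    apply Rmult_le_compat_l; [lra|]. apply horner_bound. rewrite Cmod_R, Rabs_pos_eq; lra. }
  destruct (Req_dec (Cmod c) 0) as [E|E]; auto. exfalso.
  assert (Hc : 0 < Cmod c) by (pose proof (Cmod_ge_0 c); destruct (Rle_lt_or_eq_dec 0 (Cmod c)); auto; congruence).
  set (r := Rmin 1 (Cmod c / (2 * (M + 1)))).
  assert (Hr : 0 < r <= 1).
  { split; [apply Rmin_glb_lt; [lra|apply Rdiv_lt_0_compat; lra]|apply Rmin_l]. }
  specialize (Hb r Hr).
  assert (r * M <= Cmod c / (2 * (M + 1)) * M) by (apply Rmult_le_compat_r, Rmin_r; lra).
  assert (Cmod c / (2 * (M + 1)) * M < Cmod c).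
  { replace (Cmod c / (2 * (M + 1)) * M) with (Cmod c * (M / (2 * (M + 1)))) by (field; lra).
    assert (M / (2 * (M + 1)) < 1).
    { apply Rmult_lt_reg_r with (2 * (M + 1)); [lra|]. unfold Rdiv.
      rewrite Rmult_assoc, Rinv_l by lra. lra. }
    nra. }
  lra.
Qed.

Lemma horner_zero P :
  (forall r : R, 0 < r <= 1 -> horner P (RtoC r) = RtoC 0) -> forall t, horner P t = RtoC 0.
Proof.
  induction P as [|c P IH]; intros H t; simpl; auto.
  pose proof (horner_const_zero c P H) as ->. rewrite IH; [ring|].
  intros r Hr. specialize (H r Hr). simpl in H.
  assert (RtoC r <> RtoC 0) by (intro E; injection E; lra).
  replace (horner P r) with (Cmult (Cinv (RtoC r)) (Cplus (RtoC 0) (Cmult (RtoC r) (horner P r))))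
    by (field; auto).
  rewrite H. ring.
Qed.

Lemma Cconj_RtoC r : Cconj (RtoC r) = RtoC r.
Proof. unfold Cconj, RtoC; simpl; f_equal; ring. Qed.

Lemma Cconj_Ci : Cconj Ci = Copp Ci.
Proof. unfold Cconj, Ci, Copp; simpl; f_equal; ring. Qed.

Definition sym_part (b : field) (x : pt) : C :=
  Cmult (Cplus (b x) (Cconj (b (pt_opp x)))) (RtoC (/2)).
Definition asym_part (b : field) (x : pt) : C :=
  Cmult (Cminus (b x) (Cconj (b (pt_opp x)))) (Cmult (RtoC (-/2)) Ci).

Section Polarisation.

Variables (Z : list pt) (b : field).
Hypotheses (HZ : opp_closed Z) (Hb : supported_in Z b).

Let sym := sym_part b.
Let asym := asym_part b.

Lemma polarisation_eq : (fun x => Cplus (sym x) (Cmult Ci (asym x))) = b.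
Proof.
  apply functional_extensionality; intros x. unfold sym, asym, sym_part, asym_part.
  apply injective_projections; simpl; field.
Qed.

Lemma polarisation_conj_sym (r : R) : conj_sym (fun x => Cplus (sym x) (Cmult (RtoC r) (asym x))).
Proof.
  intros x. unfold sym, asym, sym_part, asym_part. rewrite pt_opp_involutive.
  repeat rewrite ?Cplus_conj, ?Cmult_conj, ?Cminus_conj, ?Cconj_conj, ?Cconj_RtoC, ?Cconj_Ci.
  ring.
Qed.

Lemma polarisation_supported (r : R) :
  supported_in Z (fun x => Cplus (sym x) (Cmult (RtoC r) (asym x))).
Proof.
  intros x Hx. destruct (classic (b x = RtoC 0 /\ b (pt_opp x) = RtoC 0)) as [[E1 E2]|NE].
  - exfalso; apply Hx. unfold sym, asym, sym_part, asym_part. rewrite E1, E2.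
    apply injective_projections; simpl; ring.
  - apply not_and_or in NE as [NE|NE]; auto.
    rewrite <- (pt_opp_involutive x). apply HZ, Hb; auto.
Qed.

End Polarisation.

(* A polynomial identity on conjugate-symmetric fields extends to complex fields: along
   [sym + t * asym] it is a polynomial in [t] vanishing for real [t], hence at [t = i]. *)
Lemma fpeval_zero_of_conj_sym T Z : opp_closed Z ->
  (forall b, conj_sym b -> supported_in Z b -> fpeval T b = RtoC 0) ->
  forall b, supported_in Z b -> fpeval T b = RtoC 0.
Proof.
  intros HZ H b Hb.
  rewrite <- (polarisation_eq b).
  destruct (fpeval_affine_poly (sym_part b) (asym_part b) T) as [P HP]. rewrite HP. apply horner_zero. intros r _. rewrite <- HP.
  apply H; [apply polarisation_conj_sym|apply polarisation_supported; auto].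
Qed.

Lemma fpeval_eq_of_conj_sym T1 T2 Z : opp_closed Z ->
  (forall b, conj_sym b -> supported_in Z b -> fpeval T1 b = fpeval T2 b) ->
  forall b, supported_in Z b -> fpeval T1 b = fpeval T2 b.
Proof.
  intros HZ H b Hb.
  set (D := T1 ++ map (fun cq => (Cmult (RtoC (-1)) (fst cq), snd cq)) T2).
  assert (ED : forall b, fpeval D b = Cminus (fpeval T1 b) (fpeval T2 b)).
  { intros b'. unfold D. rewrite fpeval_app, fpeval_scal. ring. }
  assert (HD : fpeval D b = RtoC 0).
  { apply (fpeval_zero_of_conj_sym D Z HZ); auto. intros b' Hs' Hb'. rewrite ED, H by auto. ring. }
  rewrite ED in HD.
  transitivity (Cplus (Cminus (fpeval T1 b) (fpeval T2 b)) (fpeval T2 b)); [ring|]. rewrite HD; ring.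
Qed.

Definition dot (x y : pt) : R := fst x * fst y + snd x * snd y.

Definition mat_mul (A B : mat2) : mat2 :=
  let '(a, b, c, d) := A in let '(a', b', c', d') := B in
  (a * a' + b * c', a * b' + b * d', c * a' + d * c', c * b' + d * d').

Definition id_mat : mat2 := (1, 0, 0, 1).

Lemma mat_app_id x : mat_app id_mat x = x.
Proof. destruct x; unfold id_mat; simpl; f_equal; ring. Qed.

Lemma mat_app_mul A B x : mat_app (mat_mul A B) x = mat_app A (mat_app B x).
Proof. destruct A as [[[a b] c] d], B as [[[a' b'] c'] d'], x; simpl; f_equal; ring. Qed.

Lemma mat_app_tr_mul A B x :
  mat_app (mat_tr (mat_mul A B)) x = mat_app (mat_tr B) (mat_app (mat_tr A) x).
Proof. destruct A as [[[a b] c] d], B as [[[a' b'] c'] d'], x; simpl; f_equal; ring. Qed.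

Lemma mat_app_opp g x : mat_app g (pt_opp x) = pt_opp (mat_app g x).
Proof. destruct g as [[[a b] c] d], x; unfold pt_opp; simpl; f_equal; ring. Qed.

Lemma orth_id : orth id_mat.
Proof. unfold orth, id_mat; repeat split; ring. Qed.

Lemma orth_dot g : orth g <-> forall x y, dot (mat_app g x) (mat_app g y) = dot x y.
Proof.
  destruct g as [[[a b] c] d]; unfold orth, dot; simpl. split.
  - intros [H1 [H2 H3]] [x1 x2] [y1 y2]; simpl.
    transitivity ((a*a+c*c) * x1 * y1 + (a*b+c*d) * (x1*y2 + x2*y1) + (b*b+d*d) * x2 * y2); [ring|].
    rewrite H1, H2, H3. ring.
  - intros H. pose proof (H (1,0) (1,0)) as E1. pose proof (H (0,1) (0,1)) as E2.
    pose proof (H (1,0) (0,1)) as E3. simpl in *. repeat split; nra.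
Qed.

Lemma orth_mul g h : orth g -> orth h -> orth (mat_mul g h).
Proof. rewrite !orth_dot. intros Hg Hh x y. rewrite !mat_app_mul, Hg, Hh. auto. Qed.

Lemma orth_form a b c d : orth (a, b, c, d) ->
  a * a + c * c = 1 /\ exists D, D * D = 1 /\ b = - (c * D) /\ d = a * D.
Proof.
  unfold orth; intros [H1 [H2 H3]]. split; auto. exists (a * d - b * c). split; [|split].
  - transitivity ((a*a+c*c)*(b*b+d*d) - (a*b+c*d)*(a*b+c*d)); [ring|]. rewrite H1, H2, H3; ring.
  - replace b with (b * (a*a+c*c)) at 1 by (rewrite H1; ring).
    transitivity (-(c*(a*d-b*c)) + a*(a*b+c*d)); [ring|]. rewrite H3; ring.
  - replace d with (d * (a*a+c*c)) at 1 by (rewrite H1; ring).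
    transitivity (a*(a*d-b*c) + c*(a*b+c*d)); [ring|]. rewrite H3; ring.
Qed.

Lemma orth_tr g : orth g -> orth (mat_tr g).
Proof.
  destruct g as [[[a b] c] d]. intros H. apply orth_form in H as [H1 [D [HD [-> ->]]]].
  unfold orth; simpl. repeat split.
  - transitivity (a*a + c*c*(D*D)); [ring|]. rewrite HD; lra.
  - transitivity (c*c + a*a*(D*D)); [ring|]. rewrite HD; lra.
  - transitivity (a*c*(1 - D*D)); [ring|]. rewrite HD; ring.
Qed.

Lemma mat_app_trK g x : orth g -> mat_app (mat_tr g) (mat_app g x) = x.
Proof.
  destruct g as [[[a b] c] d], x as [x y]. intros [H1 [H2 H3]]. simpl. f_equal.
  - transitivity ((a*a+c*c)*x + (a*b+c*d)*y); [ring|]. rewrite H1, H3; ring.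
  - transitivity ((a*b+c*d)*x + (b*b+d*d)*y); [ring|]. rewrite H2, H3; ring.
Qed.

Lemma mat_appK g x : orth g -> mat_app g (mat_app (mat_tr g) x) = x.
Proof.
  intros H. pose proof (mat_app_trK (mat_tr g) x (orth_tr g H)).
  destruct g as [[[a b] c] d]; simpl in *; auto.
Qed.

Lemma mat_app_inj g x y : orth g -> mat_app g x = mat_app g y -> x = y.
Proof. intros H E. rewrite <- (mat_app_trK g x H), <- (mat_app_trK g y H), E. auto. Qed.

Lemma on_circle_orth K g x : orth g -> on_circle K (mat_app g x) <-> on_circle K x.
Proof.
  intros H. unfold on_circle. pose proof (proj1 (orth_dot g) H x x) as E. unfold dot in E.
  replace (fst (mat_app g x) ^ 2 + snd (mat_app g x) ^ 2) with (fst x ^ 2 + snd x ^ 2)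
    by (simpl in *; lra).
  tauto.
Qed.

Lemma orth_rot th : orth (rot_mat th).
Proof. unfold orth, rot_mat. pose proof (sin2_cos2 th). unfold Rsqr in H. repeat split; nra. Qed.

Lemma orth_gamma1 : orth gamma1.
Proof. unfold orth, gamma1; repeat split; ring. Qed.

Lemma gamma1_involutive x : mat_app gamma1 (mat_app gamma1 x) = x.
Proof. destruct x; unfold gamma1; simpl; apply injective_projections; simpl; ring. Qed.

Lemma cos_sin_onto a c : a * a + c * c = 1 -> exists th, cos th = a /\ sin th = c.
Proof.
  intros H. assert (-1 <= a <= 1) by nra.
  destruct (Rle_dec 0 c).
  - exists (acos a). rewrite cos_acos, sin_acos by auto. split; auto.
    unfold Rsqr. replace (1 - a * a) with (c * c) by lra. apply sqrt_square; auto.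
  - exists (- acos a). rewrite cos_neg, sin_neg, cos_acos, sin_acos by auto. split; auto.
    unfold Rsqr. replace (1 - a * a) with ((-c) * (-c)) by lra. rewrite sqrt_square; lra.
Qed.

Lemma orth_cases g : orth g ->
  (exists th, g = rot_mat th) \/ (exists th, g = mat_mul (rot_mat th) gamma1).
Proof.
  destruct g as [[[a b] c] d]. intros H. apply orth_form in H as [H1 [D [HD [-> ->]]]].
  assert (D = 1 \/ D = -1) as [->| ->] by nra.
  - left. destruct (cos_sin_onto a c H1) as [th [Ec Es]]. exists th.
    unfold rot_mat. rewrite Ec, Es. repeat (apply injective_projections; simpl); ring.
  - right. destruct (cos_sin_onto (-a) (-c)) as [th [Ec Es]]; [nra|]. exists th.
    unfold rot_mat, gamma1; simpl. rewrite Ec, Es. repeat (apply injective_projections; simpl); ring.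
Qed.

Definition pt_add (x y : pt) : pt := (fst x + fst y, snd x + snd y).
Definition pt_sum (ks : list pt) : pt := fold_right pt_add (0, 0) ks.

Lemma mat_app_pt_sum g ks : mat_app g (pt_sum ks) = pt_sum (map (mat_app g) ks).
Proof.
  induction ks as [|k ks IH]; destruct g as [[[a b] c] d]; simpl; [f_equal; ring|].
  rewrite <- IH. destruct (pt_sum ks), k; unfold pt_add; simpl; f_equal; ring.
Qed.

Lemma pt_sum_orth g ks k : orth g -> (pt_sum (map (mat_app g) ks) = mat_app g k <-> pt_sum ks = k).
Proof. intros Hg. rewrite <- mat_app_pt_sum. split; [apply mat_app_inj; auto|intros ->; auto]. Qed.

Lemma conj_sym_orth g b : conj_sym b -> conj_sym (orth_act g b).
Proof. intros Hb x. unfold orth_act. rewrite mat_app_opp. apply Hb. Qed.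

Definition phase (s t : R) (x : pt) : C := cexp_mi (s * fst x + t * snd x).

Lemma cexp_mi_add a b : cexp_mi (a + b) = Cmult (cexp_mi a) (cexp_mi b).
Proof. unfold cexp_mi. apply injective_projections; simpl; rewrite ?cos_plus, ?sin_plus; ring. Qed.

Lemma cexp_mi_add_PI a : cexp_mi (a + PI) = Copp (cexp_mi a).
Proof. unfold cexp_mi. rewrite neg_cos, neg_sin. apply injective_projections; simpl; ring. Qed.

Lemma phase_opp s t x : phase s t (pt_opp x) = Cconj (phase s t x).
Proof.
  unfold phase, cexp_mi, Cconj, pt_opp; simpl.
  replace (s * - fst x + t * - snd x) with (- (s * fst x + t * snd x)) by ring.
  rewrite cos_neg, sin_neg. auto.
Qed.

Lemma phase_conj_mult s t x : Cmult (Cconj (phase s t x)) (phase s t x) = RtoC 1.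
Proof.
  unfold phase, cexp_mi, Cconj. pose proof (sin2_cos2 (s * fst x + t * snd x)) as S2. unfold Rsqr in S2.
  apply injective_projections; simpl; nra.
Qed.

Lemma Cprod_phase s t ks : Cprod (map (phase s t) ks) = phase s t (pt_sum ks).
Proof.
  induction ks as [|k ks IH]; unfold Cprod in *; simpl.
  - unfold phase, cexp_mi; simpl. rewrite !Rmult_0_r, Rplus_0_r, cos_0, sin_0.
    apply injective_projections; simpl; ring.
  - rewrite IH. unfold phase, pt_add; simpl. rewrite <- cexp_mi_add. f_equal. ring.
Qed.

Lemma conj_sym_trans s t b : conj_sym b -> conj_sym (trans_act s t b).
Proof. intros Hb x. unfold trans_act. rewrite Hb, Cmult_conj. fold (phase s t (pt_opp x)). rewrite phase_opp. auto. Qed.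

Lemma supported_in_trans s t Z b : supported_in Z b -> supported_in Z (trans_act s t b).
Proof. intros Hb x Hx. apply Hb. intros E. apply Hx. unfold trans_act. rewrite E. ring. Qed.

Lemma fpeval_trans_act s t T b : fpeval T (trans_act s t b) =
  fpeval (map (fun cq => (Cmult (fst cq) (Cprod (map (phase s t) (snd cq))), snd cq)) T) b.
Proof.
  unfold fpeval. rewrite map_map. apply Csum_ext. intros cq _. simpl. unfold trans_act.
  rewrite Cprod_mult. unfold phase. ring.
Qed.

Lemma phase_antipodal x y : x <> y -> exists s t, phase s t x = Copp (phase s t y).
Proof.
  intros Hne. set (dx := fst x - fst y). set (dy := snd x - snd y).
  assert (Hr : dx * dx + dy * dy <> 0).
  { intros E. apply Hne. assert (dx = 0) by nra. assert (dy = 0) by nra.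
    destruct x, y; unfold dx, dy in *; simpl in *. f_equal; lra. }
  exists (PI * dx / (dx * dx + dy * dy)), (PI * dy / (dx * dx + dy * dy)).
  unfold phase. rewrite <- cexp_mi_add_PI. f_equal. unfold dx, dy in *. field. auto.
Qed.

(** * The twelve wave vectors of [E^c] *)

Lemma pt_eqb_eq a b : a = b -> pt_eqb a b = true.
Proof. intros ->; unfold pt_eqb; destruct (Req_EM_T _ _); [destruct (Req_EM_T _ _)|]; tauto. Qed.

Lemma pt_eqb_neq a b : a <> b -> pt_eqb a b = false.
Proof.
  intros H; unfold pt_eqb; destruct (Req_EM_T _ _); [destruct (Req_EM_T _ _)|]; auto.
  exfalso; apply H; destruct a, b; simpl in *; subst; auto.
Qed.

Section Configuration.

Variables (L1 L2 N2 : R).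
Hypotheses (h0 : 0 < N2) (h1 : N2 < L2) (h2 : L2 < L1) (hc : L1 * L1 = L2 * L2 + N2 * N2).

Notation embc := (emb L1 L2 N2).

(* Node [j < 12] carries the variable [cvar v j]: the six wave vectors, then their opposites. *)
Definition node (j : nat) : pt :=
  if Nat.ltb j 6 then wave L1 L2 N2 j else pt_opp (wave L1 L2 N2 (j - 6)).

Definition nodes : list pt := map node (seq 0 12).

Definition conj_index (j : nat) : nat := if Nat.ltb j 6 then (j + 6)%nat else (j - 6)%nat.

Ltac cases12 i := destruct i as [|[|[|[|[|[|[|[|[|[|[|[|i]]]]]]]]]]]]; try lia.

Lemma node_inj i j : (i < 12)%nat -> (j < 12)%nat -> node i = node j -> i = j.
Proof.
  intros Hi Hj E. cases12 i; cases12 j; try reflexivity; exfalso;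
  unfold node, pt_opp in E; simpl in E; injection E; intros; lra.
Qed.

Lemma In_nodes x : In x nodes <-> exists j, (j < 12)%nat /\ x = node j.
Proof.
  unfold nodes. rewrite in_map_iff. split.
  - intros [j [<- Hj]]. apply in_seq in Hj. exists j; split; auto; lia.
  - intros [j [Hj ->]]. exists j; split; auto. apply in_seq; lia.
Qed.

Lemma node_in j : (j < 12)%nat -> In (node j) nodes.
Proof. intros; apply In_nodes; eauto. Qed.

Lemma NoDup_nodes : NoDup nodes.
Proof.
  apply FinFun.Injective_map_NoDup_in; [|apply seq_NoDup].
  intros i j Hi Hj. apply in_seq in Hi, Hj. apply node_inj; lia.
Qed.

Lemma nodes_on_circle x : In x nodes -> on_circle L1 x.
Proof.
  intros Hx. apply In_nodes in Hx as [j [Hj ->]]. unfold on_circle.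
  rewrite <- (sqrt_square L1) by lra. f_equal.
  cases12 j; unfold node, pt_opp; simpl; first [ring | rewrite hc; ring].
Qed.

Lemma conj_index_lt j : (j < 12)%nat -> (conj_index j < 12)%nat.
Proof. intros; unfold conj_index; destruct (Nat.ltb_spec j 6); lia. Qed.

Lemma node_opp j : (j < 12)%nat -> pt_opp (node j) = node (conj_index j).
Proof. intros Hj. cases12 j; unfold node, conj_index; simpl; auto; apply pt_opp_involutive. Qed.

Lemma cvar_conj_index v j : (j < 12)%nat -> cvar v (conj_index j) = Cconj (cvar v j).
Proof. intros Hj. cases12 j; unfold cvar, conj_index; simpl; auto; rewrite Cconj_conj; auto. Qed.

Lemma nodes_opp_closed : opp_closed nodes.
Proof.
  intros x Hx. apply In_nodes in Hx as [j [Hj ->]]. rewrite node_opp by auto.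
  apply node_in, conj_index_lt; auto.
Qed.

Lemma gamma1_nodes x : In x nodes -> In (mat_app gamma1 x) nodes.
Proof.
  intros Hx. apply In_nodes in Hx as [j [Hj ->]]. apply In_nodes.
  cases12 j; [exists 6%nat|exists 1%nat|exists 9%nat|exists 8%nat|exists 11%nat|exists 10%nat
             |exists 0%nat|exists 7%nat|exists 3%nat|exists 2%nat|exists 5%nat|exists 4%nat];
  (split; [lia|]); unfold node, pt_opp, gamma1; simpl; apply injective_projections; simpl; ring.
Qed.

Lemma emb_unfold v x : embc v x =
  if pt_eqb x (node 0) then v 0%nat else if pt_eqb x (node 6) then Cconj (v 0%nat) else
  if pt_eqb x (node 1) then v 1%nat else if pt_eqb x (node 7) then Cconj (v 1%nat) else
  if pt_eqb x (node 2) then v 2%nat else if pt_eqb x (node 8) then Cconj (v 2%nat) else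
  if pt_eqb x (node 3) then v 3%nat else if pt_eqb x (node 9) then Cconj (v 3%nat) else
  if pt_eqb x (node 4) then v 4%nat else if pt_eqb x (node 10) then Cconj (v 4%nat) else
  if pt_eqb x (node 5) then v 5%nat else if pt_eqb x (node 11) then Cconj (v 5%nat) else RtoC 0.
Proof. reflexivity. Qed.

Lemma emb_node v j : (j < 12)%nat -> embc v (node j) = cvar v j.
Proof.
  intros Hj. rewrite emb_unfold.
  cases12 j; repeat match goal with |- context [pt_eqb (node ?a) (node ?b)] =>
    first [ rewrite (pt_eqb_eq (node a) (node b)) by reflexivity
          | rewrite (pt_eqb_neq (node a) (node b))
              by (let E := fresh in intro E; apply node_inj in E; lia) ] end; reflexivity.
Qed.

Lemma emb_out v x : ~ In x nodes -> embc v x = RtoC 0.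
Proof.
  intros H. rewrite emb_unfold.
  rewrite !(pt_eqb_neq x (node _)) by (intros ->; apply H, node_in; lia). reflexivity.
Qed.

Lemma emb_supported v : supported_in nodes (embc v).
Proof. intros x Hx. destruct (classic (In x nodes)); auto. exfalso; apply Hx, emb_out; auto. Qed.

Lemma emb_supp_list v : supp_list L1 (embc v) nodes.
Proof. split; [apply NoDup_nodes|split; [apply nodes_on_circle|apply emb_supported]]. Qed.

Definition coords (b : field) : C6 := fun i => b (wave L1 L2 N2 i).

Lemma cvar_coords b m : conj_sym b -> (m < 12)%nat -> cvar (coords b) m = b (node m).
Proof. intros Hs Hm. unfold cvar, coords, node. destruct (Nat.ltb m 6); auto. Qed.

Lemma emb_coords b x : conj_sym b -> supported_in nodes b -> embc (coords b) x = b x.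
Proof.
  intros Hs Hb. destruct (classic (In x nodes)) as [H|H].
  - apply In_nodes in H as [j [Hj ->]]. rewrite emb_node by auto. apply cvar_coords; auto.
  - rewrite emb_out by auto. destruct (classic (b x = RtoC 0)) as [E|E]; auto.
    exfalso; apply H, Hb; auto.
Qed.

Lemma supported_in_orth g b Z Z' : orth g -> supported_in Z b ->
  (forall x, In x Z -> In (mat_app g x) Z') -> supported_in Z' (orth_act g b).
Proof.
  intros Hg Hb Hmap x Hx. unfold orth_act in Hx. apply Hb, Hmap in Hx.
  rewrite mat_appK in Hx; auto.
Qed.

Lemma restriction_commutes_rot p (Ft : C6 -> C6) (F : field -> field) :
  E2_poly_field L1 p F ->
  (forall v k, on_circle L1 k -> F (embc v) k = embc (Ft v) k) ->
  forall th v v', ext_eq (rot_act th (embc v)) (embc v') ->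
  ext_eq (rot_act th (embc (Ft v))) (embc (Ft v')).
Proof.
  intros [_ [Horth _]] Hres th v v' Hvv' k.
  assert (Ot : orth (mat_tr (rot_mat th))) by apply orth_tr, orth_rot.
  destruct (classic (on_circle L1 k)) as [Hk|Hk].
  - rewrite <- Hres by auto.
    replace (embc v') with (rot_act th (embc v)) by (apply functional_extensionality; auto).
    unfold rot_act.
    rewrite (Horth (rot_mat th) (embc v) nodes (orth_rot th) (emb_supp_list v) k Hk).
    unfold orth_act. rewrite Hres; auto. apply on_circle_orth; auto.
  - unfold rot_act, orth_act. rewrite !emb_out; auto.
    + intros H. apply Hk, nodes_on_circle; auto.
    + intros H. apply Hk. apply nodes_on_circle in H. apply on_circle_orth in H; auto.
Qed.

Section Lift.

Variables (p : nat) (Ft : C6 -> C6).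
Hypotheses (Hpoly : hom_poly_field_C6 p Ft) (HG : Gamma_equivariant L1 L2 N2 Ft)
  (Hrot : forall th v v', ext_eq (rot_act th (embc v)) (embc v') ->
                          ext_eq (rot_act th (embc (Ft v))) (embc (Ft v'))).

Definition Ft_terms_spec (i : nat) (T : list (C * list nat)) : Prop :=
  (forall c m, In (c, m) T -> length m = p /\ forall j, In j m -> (j < 12)%nat) /\
  forall v, Ft v i = Csum (map (fun cm => Cmult (fst cm) (mono_eval v (snd cm))) T).

Definition Ft_terms (i : nat) : list (C * list nat) := epsilon (inhabits []) (Ft_terms_spec i).

Lemma Ft_termsP i : (i < 6)%nat -> Ft_terms_spec i (Ft_terms i).
Proof. intros Hi. unfold Ft_terms. apply epsilon_spec. apply Hpoly; auto. Qed.

(* Component [j] of [emb (Ft v)], as a polynomial in the values of [emb v] at the nodes;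
   for [j >= 6] it is the conjugate of component [j - 6]. *)
Definition node_fpoly (j : nat) : fpoly :=
  if Nat.ltb j 6 then map (fun cm => (fst cm, map node (snd cm))) (Ft_terms j)
  else map (fun cm => (Cconj (fst cm), map (fun m => node (conj_index m)) (snd cm)))
           (Ft_terms (j - 6)).

Definition lift (k : pt) : fpoly :=
  if excluded_middle_informative (In k nodes)
  then node_fpoly (epsilon (inhabits 0%nat) (fun j => (j < 12)%nat /\ k = node j)) else [].

Lemma lift_node j : (j < 12)%nat -> lift (node j) = node_fpoly j.
Proof.
  intros Hj. unfold lift. destruct excluded_middle_informative as [H|H].
  - f_equal. destruct (epsilon_spec (inhabits 0%nat) (fun i => (i < 12)%nat /\ node j = node i))
      as [E1 E2]; [exists j; auto|]. apply node_inj in E2; auto.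
  - exfalso; apply H, node_in; auto.
Qed.

Lemma lift_out k : ~ In k nodes -> lift k = [].
Proof. intros H; unfold lift; destruct excluded_middle_informative; tauto. Qed.

Lemma lift_terms k c qs : In (c, qs) (lift k) -> length qs = p /\ forall q, In q qs -> In q nodes.
Proof.
  destruct (classic (In k nodes)) as [H|H]; [|rewrite lift_out by auto; intros []].
  apply In_nodes in H as [j [Hj ->]]. rewrite lift_node by auto. unfold node_fpoly.
  destruct (Nat.ltb_spec j 6) as [Hl|Hl]; intros Hin; apply in_map_iff in Hin as [[c' m] [E Hm]];
    injection E as <- <-; rewrite length_map.
  - destruct (proj1 (Ft_termsP j Hl) c' m Hm) as [Hlen Hlt]. split; auto.
    intros q Hq. apply in_map_iff in Hq as [i [<- Hi]]. apply node_in; auto.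
  - destruct (proj1 (Ft_termsP (j - 6) ltac:(lia)) c' m Hm) as [Hlen Hlt]. split; auto.
    intros q Hq. apply in_map_iff in Hq as [i [<- Hi]]. apply node_in, conj_index_lt; auto.
Qed.

Lemma emb_Ft_lift w b : (forall m, (m < 12)%nat -> cvar w m = b (node m)) ->
  forall k, embc (Ft w) k = fpeval (lift k) b.
Proof.
  intros Hw k. destruct (classic (In k nodes)) as [H|H];
    [|rewrite emb_out, lift_out by auto; reflexivity].
  apply In_nodes in H as [j [Hj ->]]. rewrite emb_node, lift_node by auto. unfold cvar, node_fpoly.
  destruct (Nat.ltb_spec j 6) as [Hl|Hl].
  - destruct (Ft_termsP j Hl) as [T1 ->]. unfold fpeval. rewrite map_map.
    apply Csum_ext. intros [c m] Hcm. simpl. f_equal. unfold mono_eval. rewrite map_map.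
    apply Cprod_ext. intros i Hi. apply Hw, (T1 c m Hcm); auto.
  - destruct (Ft_termsP (j - 6) ltac:(lia)) as [T1 ->]. unfold fpeval.
    rewrite Csum_conj, !map_map. apply Csum_ext. intros [c m] Hcm. simpl.
    rewrite Cmult_conj. f_equal. unfold mono_eval.
    rewrite Cprod_conj, !map_map. apply Cprod_ext. intros i Hi.
    assert (i < 12)%nat by (apply (T1 c m Hcm); auto).
    rewrite <- cvar_conj_index by auto. apply Hw, conj_index_lt; auto.
Qed.

Lemma emb_Ft_coords b : conj_sym b -> supported_in nodes b ->
  forall k, embc (Ft (coords b)) k = fpeval (lift k) b.
Proof. intros Hs Hb. apply emb_Ft_lift. intros m Hm. apply cvar_coords; auto. Qed.

(* Every [g] in O(2) is a rotation, possibly after [gamma1]. *)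
Lemma lift_orth_conj_sym g : orth g -> forall b, conj_sym b -> supported_in nodes b ->
  supported_in nodes (orth_act g b) ->
  forall k, fpeval (lift (mat_app g k)) (orth_act g b) = fpeval (lift k) b.
Proof.
  intros Hg b Hs Hb Hgb k.
  rewrite <- !emb_Ft_coords; auto using conj_sym_orth.
  destruct (orth_cases g Hg) as [[th ->]|[th ->]].
  - symmetry. rewrite <- (mat_app_trK (rot_mat th) k) at 1 by apply orth_rot.
    apply (Hrot th (coords b) (coords (orth_act (rot_mat th) b))).
    intros x. rewrite (emb_coords (orth_act _ b)) by auto using conj_sym_orth.
    unfold rot_act, orth_act. rewrite emb_coords by auto. reflexivity.
  - set (b1 := orth_act gamma1 b).
    assert (Hs1 : conj_sym b1) by (apply conj_sym_orth; auto).
    assert (Hb1 : supported_in nodes b1) by (apply (supported_in_orth _ _ nodes); auto using orth_gamma1, gamma1_nodes).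
    rewrite <- (Hrot th (coords b1) (coords (orth_act (mat_mul (rot_mat th) gamma1) b))).
    + unfold rot_act, orth_act. rewrite mat_app_mul, mat_app_trK by apply orth_rot.
      rewrite (proj1 HG (coords b) (coords b1)).
      * unfold orth_act. change (mat_tr gamma1) with gamma1. rewrite gamma1_involutive. auto.
      * intros x. rewrite (emb_coords b1) by auto.
        unfold b1, orth_act. rewrite emb_coords by auto. reflexivity.
    + intros x. rewrite (emb_coords (orth_act _ b)) by auto using conj_sym_orth.
      unfold rot_act, orth_act. rewrite (emb_coords b1) by auto.
      unfold b1, orth_act. rewrite mat_app_tr_mul. reflexivity.
Qed.

Lemma lift_trans_conj_sym s t b : conj_sym b -> supported_in nodes b ->
  forall k, fpeval (lift k) (trans_act s t b) = Cmult (phase s t k) (fpeval (lift k) b).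
Proof.
  intros Hs Hb k. rewrite <- !emb_Ft_coords; auto using conj_sym_trans, supported_in_trans.
  apply (proj2 (proj2 HG) s t (coords b) (coords (trans_act s t b))).
  intros x. rewrite !emb_coords; auto using conj_sym_trans, supported_in_trans.
  unfold trans_act. rewrite emb_coords; auto.
Qed.

Lemma lift_orth g : orth g -> forall Z, opp_closed Z -> (forall x, In x Z -> In x nodes) ->
  (forall x, In x Z -> In (mat_app g x) nodes) -> forall b, supported_in Z b -> forall k,
  fpeval (lift (mat_app g k)) (orth_act g b) = fpeval (lift k) b.
Proof.
  intros Hg Z HZ HZn HgZ b Hb k.
  rewrite <- (fpeval_ext _ (fun x => b (mat_app (mat_tr g) x))) by reflexivity.
  rewrite <- fpeval_map_pts. revert b Hb. apply (fpeval_eq_of_conj_sym _ _ Z HZ).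
  intros b Hs Hb. rewrite fpeval_map_pts. apply lift_orth_conj_sym; auto.
  - intros x Hx; apply HZn, Hb; auto.
  - apply (supported_in_orth _ _ Z); auto.
Qed.

Lemma lift_trans s t b : supported_in nodes b -> forall k,
  fpeval (lift k) (trans_act s t b) = Cmult (phase s t k) (fpeval (lift k) b).
Proof.
  intros Hb k. rewrite fpeval_trans_act, <- fpeval_scal. revert b Hb.
  apply (fpeval_eq_of_conj_sym _ _ nodes nodes_opp_closed). intros b Hs Hb.
  rewrite fpeval_scal, <- fpeval_trans_act. apply lift_trans_conj_sym; auto.
Qed.

(** * The kernel of the extension *)

Definition origin : pt := (0, 0).

Definition select (s : list bool) (ks : list pt) (w : nat -> C) : field := fun x =>
  Csum (map (fun j => Cmult (Cind (nth j s false = true)) (Cmult (w j) (Cind (nth j ks origin = x))))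
            (seq 0 (length ks))).

(* By inclusion-exclusion ([coef_weighted_formula]) this extracts from [lift k] the
   coefficient of [b ks_0 * ... * b ks_(p-1)], summed over the reorderings of [ks]. *)
Definition coef_weighted (w : nat -> C) (ks : list pt) (k : pt) : C :=
  Csum (map (fun s => Cmult (bsign s) (fpeval (lift k) (select s ks w))) (tuples bools (length ks))).

Definition coef : list pt -> pt -> C := coef_weighted (fun _ => RtoC 1).

Lemma coef_weighted_formula w ks k : length ks = p -> coef_weighted w ks k =
  Csum (map (fun cq => Cmult (fst cq) (Csum (map (fun phi => Cmult (Cind (covers (length ks) phi))
     (zipprod (fun q j => Cmult (w j) (Cind (nth j ks origin = q))) (snd cq) phi))
     (tuples (seq 0 (length ks)) (length ks))))) (lift k)).
Proof.
  intros Hlen. unfold coef_weighted, fpeval.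
  rewrite (Csum_ext _ (fun s => Csum (map (fun cq => Cmult (fst cq) (Cmult (bsign s)
     (Cprod (map (select s ks w) (snd cq))))) (lift k)))).
  2:{ intros s _. rewrite <- Csum_scal_l. apply Csum_ext. intros; ring. }
  rewrite Csum_swap. apply Csum_ext. intros [c qs] Hcq. simpl. rewrite Csum_scal_l. f_equal.
  destruct (lift_terms k c qs Hcq) as [Hq _].
  pose proof (inclusion_exclusion (length ks) qs (fun q j => Cmult (w j) (Cind (nth j ks origin = q))))
    as HIE.
  rewrite Hq, <- Hlen in HIE. exact HIE.
Qed.

Lemma coef_weighted_scale w ks k : length ks = p ->
  coef_weighted w ks k = Cmult (Cprod (map w (seq 0 (length ks)))) (coef ks k).
Proof.
  intros Hlen. unfold coef. rewrite !coef_weighted_formula by auto.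
  rewrite <- Csum_scal_l. apply Csum_ext. intros [c qs] Hcq. simpl.
  lazymatch goal with |- _ = Cmult ?W (Cmult c ?S) => transitivity (Cmult c (Cmult W S)); [|ring] end.
  f_equal. rewrite <- Csum_scal_l. apply Csum_ext. intros phi Hphi.
  assert (Hl : length qs = length phi).
  { apply In_tuples in Hphi. destruct (lift_terms k c qs Hcq). lia. }
  rewrite zipprod_mult, zipprod_r, (zipprod_mult (fun _ _ => RtoC 1)), zipprod_r by auto.
  unfold Cind at 1 3. destruct excluded_middle_informative as [Hs|Hs]; [|ring].
  rewrite (Cprod_perm _ _ (Permutation_map _ (covers_perm _ _ Hphi Hs))).
  replace (Cprod (map (fun _ : nat => RtoC 1) phi)) with (RtoC 1); [ring|].
  clear. induction phi; unfold Cprod in *; simpl; auto. rewrite <- IHphi; ring.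
Qed.

Lemma select_supported s ks w : supported_in ks (select s ks w).
Proof.
  intros x Hx. destruct (classic (In x ks)) as [H|H]; auto. exfalso; apply Hx.
  apply Csum_zero. intros j Hj. apply in_seq in Hj. rewrite (Cind_false (nth j ks origin = x)); [ring|].
  intros E. apply H. rewrite <- E. apply nth_In; lia.
Qed.

Lemma trans_select s t s' ks x : trans_act s t (select s' ks (fun _ => RtoC 1)) x =
  select s' ks (fun j => phase s t (nth j ks origin)) x.
Proof.
  unfold trans_act, select. rewrite <- Csum_scal_l. apply Csum_ext. intros j _.
  unfold Cind at 2 4. destruct excluded_middle_informative as [->|]; unfold phase; ring.
Qed.

Lemma coef_trans s t ks k : length ks = p -> (forall q, In q ks -> In q nodes) ->
  Cmult (phase s t k) (coef ks k) = Cmult (phase s t (pt_sum ks)) (coef ks k).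
Proof.
  intros Hlen Hn. transitivity (coef_weighted (fun j => phase s t (nth j ks origin)) ks k).
  - unfold coef, coef_weighted. rewrite <- Csum_scal_l. apply Csum_ext. intros s' _.
    rewrite <- (fpeval_ext _ _ _ (trans_select s t s' ks)), lift_trans; [ring|].
    intros x Hx; apply Hn, (select_supported s' ks _ x Hx).
  - rewrite coef_weighted_scale by auto. f_equal.
    rewrite <- (map_map (fun j => nth j ks origin) (phase s t)), map_nth_seq. apply Cprod_phase.
Qed.

Lemma coef_eq0 ks k : length ks = p -> (forall q, In q ks -> In q nodes) ->
  pt_sum ks <> k -> coef ks k = RtoC 0.
Proof.
  intros Hlen Hn Hne. destruct (phase_antipodal _ _ Hne) as [s [t E]].
  pose proof (coef_trans s t ks k Hlen Hn) as Ec. rewrite E in Ec.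
  rewrite <- (Cmult_1_l (coef ks k)), <- (phase_conj_mult s t k), <- Cmult_assoc.
  replace (Cmult (phase s t k) (coef ks k)) with (RtoC 0); [ring|].
  apply injective_projections; simpl in *; injection Ec; intros; lra.
Qed.

Lemma coef_orth g ks k : orth g -> (forall q, In q ks -> In q nodes) ->
  (forall q, In q ks -> In (mat_app g q) nodes) ->
  coef (map (mat_app g) ks) (mat_app g k) = coef ks k.
Proof.
  intros Hg Hn Hgn. unfold coef, coef_weighted. rewrite length_map.
  apply Csum_ext. intros s _. f_equal.
  transitivity (fpeval (lift (mat_app g k)) (orth_act g (select s ks (fun _ => RtoC 1)))).
  - apply fpeval_ext. intros x. unfold select, orth_act. rewrite length_map.
    apply Csum_ext. intros j Hj. apply in_seq in Hj.
    rewrite (nth_map_lt _ _ _ origin) by lia. do 2 f_equal. apply Cind_iff. split.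
    + intros <-. symmetry; apply mat_app_trK; auto.
    + intros ->. apply mat_appK; auto.
  - apply (lift_orth g Hg (ks ++ map pt_opp ks)).
    + intros x Hx. apply in_app_iff in Hx as [Hx|Hx]; apply in_app_iff.
      * right. apply in_map; auto.
      * left. apply in_map_iff in Hx as [y [<- Hy]]. rewrite pt_opp_involutive; auto.
    + intros x Hx. apply in_app_iff in Hx as [Hx|Hx]; auto.
      apply in_map_iff in Hx as [y [<- Hy]]. apply nodes_opp_closed; auto.
    + intros x Hx. apply in_app_iff in Hx as [Hx|Hx]; auto.
      apply in_map_iff in Hx as [y [<- Hy]]. rewrite mat_app_opp. apply nodes_opp_closed; auto.
    + intros x Hx. apply in_app_iff. left. apply (select_supported s ks _ x Hx).
Qed.

(* [ncovers = p!]: [coef] counts each monomial once per ordering. *)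
Definition ncovers : C := Csum (map (fun phi => Cind (covers p phi)) (tuples (seq 0 p) p)).

Lemma ncovers_neq0 : ncovers <> RtoC 0.
Proof.
  intros E. destruct (Csum_Cind_re (covers p) (tuples (seq 0 p) p)) as [_ H].
  fold ncovers in H. rewrite E in H. simpl in H. enough (1 <= 0) by lra. apply H.
  exists (seq 0 p). split; [apply In_tuples; split; [apply length_seq|auto]|].
  intros j Hj. apply in_seq; lia.
Qed.

Definition kcoef (ks : list pt) (k : pt) : C := Cmult (Cinv ncovers) (coef ks k).

Lemma lift_expansion a k :
  Csum (map (fun ks => Cmult (kcoef ks k) (Cprod (map a ks))) (tuples nodes p)) = fpeval (lift k) a.
Proof.
  rewrite (Csum_ext _ (fun ks => Csum (map (fun cq => Cmult (Cmult (Cinv ncovers) (fst cq))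
     (Cmult (Cprod (map a ks)) (Csum (map (fun phi => Cmult (Cind (covers p phi))
        (zipprod (fun q j => Cind (nth j ks origin = q)) (snd cq) phi)) (tuples (seq 0 p) p)))))
     (lift k)))).
  2:{ intros ks Hks. apply In_tuples in Hks as [Hlen _].
      unfold kcoef, coef. rewrite coef_weighted_formula, Hlen by auto.
      rewrite <- Csum_scal_l, <- Csum_scal_r. apply Csum_ext. intros [c qs] _. simpl.
      rewrite (Csum_ext (fun phi => Cmult (Cind (covers p phi))
                 (zipprod (fun q j => Cmult (RtoC 1) (Cind (nth j ks origin = q))) qs phi)) _)
        by (intros; rewrite (zipprod_ext _ (fun q j => Cind (nth j ks origin = q))) by (intros; ring);
            reflexivity).
      ring. }
  rewrite Csum_swap. unfold fpeval. apply Csum_ext. intros [c qs] Hcq. simpl.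
  destruct (lift_terms k c qs Hcq) as [Hq Hqn]. rewrite Csum_scal_l, <- Hq.
  rewrite Csum_covers_delta by auto using NoDup_nodes. rewrite Hq. fold ncovers.
  field. apply ncovers_neq0.
Qed.

Definition movable (g : mat2) (ks : list pt) : Prop :=
  orth g /\ forall q, In q ks -> In (mat_app g q) nodes.

Definition mover (ks : list pt) : mat2 := epsilon (inhabits id_mat) (fun g => movable g ks).

Lemma mover_spec ks : (exists g, movable g ks) -> movable (mover ks) ks.
Proof. intros H. unfold mover. apply epsilon_spec; auto. Qed.

Lemma movable_mul h g ks : movable h (map (mat_app g) ks) -> orth g -> movable (mat_mul h g) ks.
Proof.
  intros [Hh HA] Hg. split; [apply orth_mul; auto|].
  intros q Hq. rewrite mat_app_mul. apply HA, in_map; auto.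
Qed.

Lemma ex_movable_orth g ks : orth g ->
  (exists h, movable h (map (mat_app g) ks)) <-> (exists h, movable h ks).
Proof.
  intros Hg. split; intros [h Hh]; [exists (mat_mul h g); apply movable_mul; auto|].
  exists (mat_mul h (mat_tr g)). destruct Hh as [Hh HA]. split; [apply orth_mul; auto using orth_tr|].
  intros q Hq. apply in_map_iff in Hq as [y [<- Hy]]. rewrite mat_app_mul, mat_app_trK; auto.
Qed.

Lemma kcoef_movable g h ks k : movable g ks -> movable h ks ->
  kcoef (map (mat_app g) ks) (mat_app g k) = kcoef (map (mat_app h) ks) (mat_app h k).
Proof.
  intros [Hg HgA] [Hh HhA]. set (m := mat_mul h (mat_tr g)).
  assert (Hm : forall q, mat_app m (mat_app g q) = mat_app h q)
    by (intros q; unfold m; rewrite mat_app_mul, mat_app_trK; auto).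
  replace (map (mat_app h) ks) with (map (mat_app m) (map (mat_app g) ks))
    by (rewrite map_map; apply map_ext; auto).
  rewrite <- Hm. unfold kcoef. f_equal. symmetry. apply coef_orth.
  - unfold m; apply orth_mul; auto using orth_tr.
  - intros q Hq. apply in_map_iff in Hq as [y [<- Hy]]; auto.
  - intros q Hq. apply in_map_iff in Hq as [y [<- Hy]]; rewrite Hm; auto.
Qed.

(* The paper's [P(k; k_1..k_p)]; which [g] moves [ks] into the nodes is irrelevant by
   [kcoef_movable]. *)
Definition kernel (k : pt) (ks : list pt) : C :=
  if excluded_middle_informative (pt_sum ks = k /\ exists g, movable g ks)
  then kcoef (map (mat_app (mover ks)) ks) (mat_app (mover ks) k) else RtoC 0.

Lemma kernel_orth g k ks : orth g -> kernel (mat_app g k) (map (mat_app g) ks) = kernel k ks.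
Proof.
  intros Hg. unfold kernel. pose proof (pt_sum_orth g ks k Hg) as Es.
  pose proof (ex_movable_orth g ks Hg) as Em.
  destruct excluded_middle_informative as [[E1 E2]|A1];
    destruct excluded_middle_informative as [[E3 E4]|A2]; try tauto.
  pose proof (mover_spec _ E2) as G1. pose proof (mover_spec _ E4) as G2.
  rewrite map_map, <- mat_app_mul.
  rewrite (map_ext (fun x => mat_app (mover (map (mat_app g) ks)) (mat_app g x))
                   (mat_app (mat_mul (mover (map (mat_app g) ks)) g)))
    by (intros; rewrite mat_app_mul; auto).
  apply kcoef_movable; auto. apply movable_mul; auto.
Qed.

Lemma kernel_nodes k ks : length ks = p -> (forall q, In q ks -> In q nodes) -> kernel k ks = kcoef ks k.
Proof.
  intros Hlen Hn. assert (Hid : movable id_mat ks)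
    by (split; [apply orth_id|intros; rewrite mat_app_id; auto]).
  unfold kernel. destruct excluded_middle_informative as [[E1 E2]|H].
  - rewrite (kcoef_movable _ id_mat) by auto using mover_spec. rewrite mat_app_id. f_equal.
    rewrite (map_ext _ (fun x => x)) by apply mat_app_id. apply map_id.
  - destruct (classic (pt_sum ks = k)) as [E|E]; [exfalso; apply H; split; eauto|].
    unfold kcoef. rewrite coef_eq0 by auto. ring.
Qed.

Definition some_supp_list (a : field) : list pt := epsilon (inhabits []) (supp_list L1 a).

Definition extension (a : field) (k : pt) : C :=
  Csum (map (fun ks => Cmult (kernel k ks) (Cprod (map a ks))) (tuples (some_supp_list a) p)).

Lemma extension_supp_list a l : supp_list L1 a l -> forall k,
  extension a k = Csum (map (fun ks => Cmult (kernel k ks) (Cprod (map a ks))) (tuples l p)).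
Proof.
  intros Hl k. unfold extension.
  assert (Hc : supp_list L1 a (some_supp_list a)) by (unfold some_supp_list; apply epsilon_spec; eauto).
  destruct Hl as [D1 [_ S1]], Hc as [D2 [_ S2]]. apply Csum_tuples_support_indep; auto.
Qed.

Lemma supp_list_orth g a l : orth g -> supp_list L1 a l ->
  supp_list L1 (orth_act g a) (map (mat_app g) l).
Proof.
  intros Hg [Nd [Hc Hs]]. split; [|split].
  - apply FinFun.Injective_map_NoDup; auto. intros x y; apply mat_app_inj; auto.
  - intros k Hk. apply in_map_iff in Hk as [y [<- Hy]]. apply on_circle_orth; auto.
  - intros x Hx. unfold orth_act in Hx. apply Hs in Hx. rewrite <- (mat_appK g x Hg). apply in_map; auto.
Qed.

Lemma extension_orth g a l : orth g -> supp_list L1 a l -> forall k,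
  extension (orth_act g a) k = orth_act g (extension a) k.
Proof.
  intros Hg Hl k. rewrite (extension_supp_list _ _ (supp_list_orth g a l Hg Hl)).
  unfold orth_act at 2. rewrite (extension_supp_list _ _ Hl), tuples_map, map_map.
  apply Csum_ext. intros ks _. rewrite map_map. f_equal.
  - rewrite <- (kernel_orth g (mat_app (mat_tr g) k) ks Hg), mat_appK; auto.
  - apply Cprod_ext. intros x _. unfold orth_act. rewrite mat_app_trK; auto.
Qed.

Lemma extension_trans s t a l : supp_list L1 a l -> forall k,
  extension (trans_act s t a) k = trans_act s t (extension a) k.
Proof.
  intros Hl k. assert (Hl' : supp_list L1 (trans_act s t a) l).
  { destruct Hl as [A [B Hs]]. split; [|split]; auto. intros x Hx. apply Hs. intros E; apply Hx.
    unfold trans_act; rewrite E; ring. }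
  rewrite (extension_supp_list _ _ Hl'). unfold trans_act at 2. rewrite (extension_supp_list _ _ Hl).
  rewrite <- Csum_scal_l. apply Csum_ext. intros ks _. unfold trans_act.
  rewrite Cprod_mult. fold (phase s t). rewrite Cprod_phase.
  unfold kernel. destruct excluded_middle_informative as [[-> _]|]; [unfold phase|]; ring.
Qed.

Lemma extension_emb v k : extension (embc v) k = embc (Ft v) k.
Proof.
  rewrite (extension_supp_list _ _ (emb_supp_list v)), (emb_Ft_lift v (embc v)).
  - rewrite <- lift_expansion. apply Csum_ext. intros ks Hks. apply In_tuples in Hks as [].
    rewrite kernel_nodes; auto.
  - intros m Hm. rewrite emb_node; auto.
Qed.

Lemma extension_E2_poly_field : E2_poly_field L1 p extension.
Proof.
  split; [|split].
  - exists kernel. intros a l Hl k _. apply extension_supp_list; auto.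
  - intros g a l Hg Hl k _. apply (extension_orth g a l); auto.
  - intros s t a l Hl k _. apply (extension_trans s t a l); auto.
Qed.

End Lift.

End Configuration.

Theorem mainTheorem18 (l1 l2 n2 p : nat) (Ft : C6 -> C6) :
  (0 < n2)%nat -> (n2 < l2)%nat -> (l2 < l1)%nat ->
  (l1 * l1 = l2 * l2 + n2 * n2)%nat ->
  hom_poly_field_C6 p Ft ->
  Gamma_equivariant (INR l1) (INR l2) (INR n2) Ft ->
  ((exists F : field -> field,
      E2_poly_field (INR l1) p F /\
      (forall v k, on_circle (INR l1) k ->
         F (emb (INR l1) (INR l2) (INR n2) v) k = emb (INR l1) (INR l2) (INR n2) (Ft v) k))
   <->
   (forall (theta : R) (v v' : C6),
      ext_eq (rot_act theta (emb (INR l1) (INR l2) (INR n2) v)) (emb (INR l1) (INR l2) (INR n2) v') ->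
      ext_eq (rot_act theta (emb (INR l1) (INR l2) (INR n2) (Ft v)))
             (emb (INR l1) (INR l2) (INR n2) (Ft v')))).
Proof.
  intros H0 H1 H2 Hc Hpoly HG.
  assert (h0 : 0 < INR n2) by (apply lt_0_INR; auto).
  assert (h1 : INR n2 < INR l2) by (apply lt_INR; auto).
  assert (h2 : INR l2 < INR l1) by (apply lt_INR; auto).
  assert (hc : INR l1 * INR l1 = INR l2 * INR l2 + INR n2 * INR n2)
    by (rewrite <- !mult_INR, <- plus_INR, Hc; auto).
  split.
  - intros [F [HF Hres]]. apply (restriction_commutes_rot _ _ _ h0 h1 h2 hc p Ft F HF Hres).
  - intros Hrot. exists (extension (INR l1) (INR l2) (INR n2) p Ft). split.
    + apply extension_E2_poly_field; auto.
    + intros v k _. apply extension_emb; auto.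
Qed.
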